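(* Let $X$ be a quasi-Banach space and $f=(a_n)_{n=1}^\infty\in\mathbb{F}^{\mathbb{N}}$. Then $f\in\mathscr{G}_b(X)$ if and only if the series $\sum_{n=1}^\infty a_nx_n$ converges in $X$ for every bounded sequence $(x_n)_{n=1}^\infty$ in $X$.
   Context: For $g=(b_n)\in[0,\infty]^{\mathbb{N}}$ define $\lambda_X(g)=\sup\{\|\sum_{n=1}^Nb_nx_n\|:N\in\mathbb{N},\ \|x_n\|\le1\}$ if all $b_n<\infty$, and $\lambda_X(g)=\infty$ otherwise. The galb of $X$ is $\mathscr{G}(X)=\{(a_n)\in\mathbb{F}^{\mathbb{N}}:\lambda_X((|a_n|)_n)<\infty\}$, quasi-normed by $(a_n)\mapsto\lambda_X((|a_n|)_n)$, and $\mathscr{G}_b(X)$ is the closure in $\mathscr{G}(X)$ of the finitely supported sequences. *)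

From HB Require Import structures.
From mathcomp Require Import all_boot all_order all_algebra complex.
From mathcomp Require Import all_classical all_reals ereal.
Set Implicit Arguments. Unset Strict Implicit. Unset Printing Implicit Defensive.
Import Order.TTheory GRing.Theory Num.Theory.
Local Open Scope ring_scope.
Local Open Scope classical_set_scope.

(* Generic setting: scalar field F, real numbers R, the embedding emb : R -> F
   of real scalars and the modulus absF : F -> R.  The theorem instantiates
   this with F = R (emb = id, absF = |.|) and F = R[i] (emb = r |-> r%:C,
   absF = complex modulus). Sequences are indexed by nat (n = 0,1,2,...)
   instead of n = 1,2,... *)
Section Galb.
Variables (R : realType) (F : numFieldType) (emb : R -> F) (absF : F -> R).
Variables (X : lmodType F) (q : X -> R).

Definition quasi_norm : Prop :=
  [/\ forall x, 0 <= q x,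
      forall x, q x = 0 -> x = 0,
      forall (a : F) x, q (a *: x) = absF a * q x
    & exists kappa : R, 1 <= kappa /\
        forall x y, q (x + y) <= kappa * (q x + q y)].

Definition qcauchy (u : nat -> X) : Prop :=
  forall e : R, 0 < e -> exists N : nat, forall m n : nat,
    (N <= m)%N -> (N <= n)%N -> q (u m - u n) < e.

Definition qconverges_to (u : nat -> X) (l : X) : Prop :=
  forall e : R, 0 < e -> exists N : nat, forall n : nat,
    (N <= n)%N -> q (u n - l) < e.

Definition quasi_banach : Prop :=
  quasi_norm /\ forall u : nat -> X, qcauchy u -> exists l, qconverges_to u l.

Definition series_converges (u : nat -> X) : Prop :=
  exists l : X, qconverges_to (fun N => \sum_(n < N) u n) l.

Definition qbounded (x : nat -> X) : Prop :=
  exists M : R, forall n, q (x n) <= M.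

Definition lambdaX (b : nat -> R) : \bar R :=
  ereal_sup [set r : \bar R | exists (N : nat) (x : nat -> X),
     (forall n, q (x n) <= 1) /\ r = (q (\sum_(n < N) emb (b n) *: x n))%:E].

Definition in_galb (f : nat -> F) : Prop :=
  (lambdaX (fun n => absF (f n)) < +oo)%E.

Definition fin_supp (g : nat -> F) : Prop :=
  exists N : nat, forall n, (N <= n)%N -> g n = 0.

Definition in_galb_b (f : nat -> F) : Prop :=
  in_galb f /\
  forall e : R, 0 < e -> exists g : nat -> F,
    fin_supp g /\ in_galb g /\
    (lambdaX (fun n => absF (f n - g n)) < e%:E)%E.

Definition lemma4p9_prop : Prop :=
  quasi_banach ->
  forall f : nat -> F,
    in_galb_b f <->
    (forall x : nat -> X, qbounded x ->
       series_converges (fun n => f n *: x n)).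
End Galb.

Definition realC (R : realType) (r : R) : R[i] := (r%:C)%C.
Definition modC (R : realType) (z : R[i]) : R := Normc.normc z.

From HB Require Import structures.
From mathcomp Require Import all_boot all_order all_algebra complex.
From mathcomp Require Import all_classical all_reals ereal.
From mathcomp Require Import ring lra.
Set Implicit Arguments.
Unset Strict Implicit.
Unset Printing Implicit Defensive.
Import Order.TTheory GRing.Theory Num.Theory.
Local Open Scope ring_scope.

(* If f is the lambda_X-limit of finitely supported sequences g, then past the
   support of g every tail sum sum_(n <= k < m) a_k x_k with all q(x_k) <= C
   has quasi-norm at most C lambda_X(f - g), so the partial sums are Cauchy.
   Conversely, if the tails of f do not become lambda_X-small, then for every
   N some block [N, M N) carries vectors of quasi-norm <= 1 whose weighted
   tail sum exceeds e/2; gluing these witnesses along the consecutive blocks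
   [0, M 0), [M 0, M (M 0)), ... yields a single bounded sequence whose series
   is not Cauchy.  Once the tails are small, f lies in G(X) by the
   quasi-triangle inequality and is approximated by its truncations.
   Multiplying by the phase of a_k reduces complex coefficients to the
   moduli |a_k| that lambda_X sees. *)

Lemma sumr_partialB (V : zmodType) (v : nat -> V) (n m : nat) : (n <= m)%N ->
  \sum_(k < m) v k - \sum_(k < n) v k =
  \sum_(k < m) (if (n <= k)%N then v k else 0).
Proof.
move=> le_nm; rewrite -big_mkcond /=.
have -> : \sum_(k < m | (n <= k)%N) v k = \sum_(n <= k < m) v k.
  by rewrite big_geq_mkord.
rewrite -!(big_mkord xpredT) (big_cat_nat (leq0n n) le_nm) /=.
by rewrite addrAC subrr add0r.
Qed.

Lemma sumr_trunc_le (R : numDomainType) (t : nat -> R) (m N : nat) :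
  (forall k, 0 <= t k) ->
  \sum_(k < m) (if (k < N)%N then t k else 0) <= \sum_(k < N) t k.
Proof.
move=> t_ge0; set K := maxn m N.
pose tN k := if (k < N)%N then t k else 0.
rewrite (big_ord_widen K tN (leq_maxl m N)) {}/tN.
rewrite (big_ord_widen K t (leq_maxr m N)) big_mkcond [leRHS]big_mkcond /=.
by apply: ler_sum => k _; case: ifP; case: ifP.
Qed.

Definition trunc (V : zmodType) (f : nat -> V) (N n : nat) : V :=
  if (n < N)%N then f n else 0.

Lemma fin_supp_trunc (V : numFieldType) (f : nat -> V) N :
  fin_supp (trunc f N).
Proof. by exists N => n le_Nn; rewrite /trunc ltnNge le_Nn. Qed.

(* The start s of the block [s, M s) containing k, for the partition of nat
   into the consecutive blocks [0, M 0), [M 0, M (M 0)), ... *)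
Fixpoint block_start (M : nat -> nat) (k : nat) : nat :=
  if k is k'.+1 then
    if k == M (block_start M k') then k else block_start M k'
  else 0.

Section BlockStart.
Variable M : nat -> nat.
Hypothesis ltn_M : forall s, (s < M s)%N.

Lemma block_startE s k : block_start M s = s -> (s <= k < M s)%N ->
  block_start M k = s.
Proof.
move=> start_s; elim: k => [|k IH]; first by rewrite leqn0 => /andP[/eqP <-].
rewrite leq_eqVlt => /andP[/orP[/eqP <- //|lt_sk] lt_kM].
rewrite /= IH; last by rewrite -ltnS lt_sk ltnW.
by case: eqP lt_kM => [->|]; rewrite ?ltnn.
Qed.

Lemma block_start_next s : block_start M s = s -> block_start M (M s) = M s.
Proof.
move=> start_s; have := ltn_M s; case def_Ms: (M s) => [//|k] lt_sk.
have start_k : block_start M k = s.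
  by apply: block_startE; rewrite // def_Ms ltnSn andbT -ltnS.
by rewrite /= start_k def_Ms eqxx.
Qed.

Lemma block_start_unbounded n : exists2 s, (n <= s)%N & block_start M s = s.
Proof.
elim: n => [|n [s le_ns start_s]]; first by exists 0.
by exists (M s); [exact: leq_trans (ltn_M s) | exact: block_start_next].
Qed.
End BlockStart.

Section RealScalars.
Variables (R : realType) (F : numFieldType) (emb : {rmorphism R -> F}).
Variable absF : F -> R.
Hypothesis ler_emb : {mono emb : r s / r <= s}.
Hypothesis emb_absF : forall a, emb (absF a) = `|a|.

Lemma absF_eq a r : `|a| = emb r -> absF a = r.
Proof. by rewrite -emb_absF => /(inc_inj ler_emb). Qed.

Lemma absF0 : absF 0 = 0.
Proof. by apply: absF_eq; rewrite normr0 rmorph0. Qed.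

Lemma absF_ge0 a : 0 <= absF a.
Proof. by rewrite -ler_emb rmorph0 emb_absF. Qed.

Lemma absF_emb r : 0 <= r -> absF (emb r) = r.
Proof.
by move=> r_ge0; apply: absF_eq; rewrite ger0_norm // -(rmorph0 emb) ler_emb.
Qed.

Definition phase (a : F) : F := if a == 0 then 1 else a / `|a|.

Lemma norm_phase a : `|phase a| = 1.
Proof.
rewrite /phase; case: eqP => [_|/eqP a_neq0]; first exact: normr1.
by rewrite normf_div normr_id divff ?normr_eq0.
Qed.

Lemma phase_neq0 a : phase a != 0.
Proof. by rewrite -normr_eq0 norm_phase oner_neq0. Qed.

Lemma norm_mul_phase a : `|a| * phase a = a.
Proof.
rewrite /phase; case: eqP => [->|/eqP a_neq0]; first by rewrite normr0 mul0r.
by rewrite mulrCA divff ?mulr1 ?normr_eq0.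
Qed.

Lemma mul_phaseV a : a * (phase a)^-1 = `|a|.
Proof. by rewrite -{1}(norm_mul_phase a) mulfK ?phase_neq0. Qed.

Lemma absF_phaseV a : absF (phase a)^-1 = 1.
Proof. by apply: absF_eq; rewrite normfV norm_phase invr1 rmorph1. Qed.

Section QuasiNormed.
Variables (X : lmodType F) (q : X -> R) (kappa : R).
Hypothesis qZ : forall (a : F) x, q (a *: x) = absF a * q x.
Hypothesis kappa_ge1 : 1 <= kappa.
Hypothesis qD : forall x y, q (x + y) <= kappa * (q x + q y).

Lemma kappa_gt0 : 0 < kappa.
Proof. exact: lt_le_trans ltr01 kappa_ge1. Qed.

Lemma q0 : q 0 = 0.
Proof. by rewrite -(scale0r (0 : X)) qZ absF0 mul0r. Qed.

Lemma qN x : q (- x) = q x.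
Proof.
have absFN1 : absF (-1) = 1 by apply: absF_eq; rewrite normrN1 rmorph1.
by rewrite -scaleN1r qZ absFN1 mul1r.
Qed.

Lemma q_sum_le (w : nat -> X) n :
  q (\sum_(k < n) w k) <= \sum_(k < n) kappa ^+ k.+1 * q (w k).
Proof.
elim: n w => [|n IH] w; first by rewrite !big_ord0 q0.
rewrite !big_ord_recl /= expr1; apply: le_trans (qD _ _) _.
rewrite mulrDr lerD //.
apply: le_trans (ler_wpM2l (ltW kappa_gt0) (IH (fun k => w k.+1))) _.
by rewrite mulr_sumr; apply: ler_sum => i _; rewrite mulrA -exprS.
Qed.

Lemma qconverges_cauchy u l : qconverges_to q u l -> qcauchy q u.
Proof.
move=> u_l e e_gt0; have e'_gt0 : 0 < e / (2 * kappa).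
  by rewrite divr_gt0 // mulr_gt0 // kappa_gt0.
have [N HN] := u_l _ e'_gt0; exists N => m n Nm Nn.
have -> : u m - u n = (u m - l) + - (u n - l) by rewrite opprB addrA subrK.
apply: le_lt_trans (qD _ _) _; rewrite qN.
have -> : e = kappa * (e / (2 * kappa) + e / (2 * kappa)).
  by field; rewrite gt_eqF // kappa_gt0.
by rewrite ltr_pM2l ?kappa_gt0 // ltrD ?HN.
Qed.

Lemma lambdaX_le (b : nat -> R) (C : R) :
  (forall N (x : nat -> X), (forall n, q (x n) <= 1) ->
     q (\sum_(n < N) emb (b n) *: x n) <= C) ->
  (lambdaX emb q b <= C%:E)%E.
Proof.
by move=> bound; apply: ge_ereal_sup => _ [N [x [x_le1 ->]]]; exact: bound.
Qed.

Lemma lambdaX_lt (b : nat -> R) (c : R) : (lambdaX emb q b < c%:E)%E ->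
  forall N (x : nat -> X), (forall n, q (x n) <= 1) ->
    q (\sum_(n < N) emb (b n) *: x n) < c.
Proof.
move=> lt_c N x x_le1; rewrite -lte_fin; apply: le_lt_trans lt_c.
by apply: ereal_sup_ubound; exists N, x.
Qed.

Lemma lambdaX_gt (b : nat -> R) (c : R) : (c%:E < lambdaX emb q b)%E ->
  exists N (x : nat -> X), (forall n, q (x n) <= 1) /\
    c < q (\sum_(n < N) emb (b n) *: x n).
Proof.
by move=> /ereal_sup_gt[_ [N [x [x_le1 ->]]]]; rewrite lte_fin; exists N, x.
Qed.

Lemma galb_b_cauchy (f : nat -> F) : in_galb_b emb absF q f ->
  forall x, qbounded q x -> qcauchy q (fun N => \sum_(n < N) f n *: x n).
Proof.
move=> [_ approx] x [M x_le_M] e e_gt0.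
pose M' := Num.max M 1.
have M'_gt0 : 0 < M' by rewrite lt_max ltr01 orbT.
have [g [[N0 g0] [_ lt_fg]]] := approx _ (divr_gt0 e_gt0 M'_gt0).
suff tail_lt : forall m n, (N0 <= n <= m)%N ->
    q (\sum_(k < m) f k *: x k - \sum_(k < n) f k *: x k) < e.
  exists N0 => m n N0m N0n; case: (leqP n m) => [le_nm|/ltnW le_mn].
    by apply: tail_lt; rewrite N0n.
  by rewrite -opprB qN tail_lt ?N0m.
move=> m n /andP[N0n le_nm].
rewrite (sumr_partialB (fun k => f k *: x k)) //.
pose y k := if (n <= k)%N then (emb M'^-1 * phase (f k)) *: x k else 0.
have y_le1 k : q (y k) <= 1.
  rewrite /y; case: ifP => _; last by rewrite q0.
  have absF_M'V : absF (emb M'^-1 * phase (f k)) = M'^-1.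
    apply: absF_eq; rewrite normrM norm_phase mulr1 ger0_norm //.
    by rewrite -(rmorph0 emb) ler_emb invr_ge0 ltW.
  rewrite qZ absF_M'V ler_pdivrMl // mulr1 (le_trans (x_le_M k)) //.
  by rewrite le_max lexx.
have -> : \sum_(k < m) (if (n <= k)%N then f k *: x k else 0) =
    emb M' *: \sum_(k < m) emb (absF (f k - g k)) *: y k.
  rewrite scaler_sumr; apply: eq_bigr => k _; rewrite /y.
  case: ifP => [le_nk|_]; last by rewrite !scaler0.
  rewrite g0 ?(leq_trans N0n le_nk) // subr0 emb_absF !scalerA.
  rewrite fmorphV [emb M' * _]mulrC -mulrA mulVKf ?norm_mul_phase //.
  by rewrite fmorph_eq0 gt_eqF.
rewrite qZ absF_emb ?ltW // -ltr_pdivlMl // mulrC.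
exact: lambdaX_lt lt_fg m y y_le1.
Qed.

Lemma q_sum_trunc_le (f : nat -> F) N m (x : nat -> X) :
  (forall n, q (x n) <= 1) ->
  q (\sum_(n < m) emb (absF (trunc f N n)) *: x n) <=
  \sum_(k < N) kappa ^+ k.+1 * absF (f k).
Proof.
move=> x_le1.
apply: le_trans (q_sum_le (fun n => emb (absF (trunc f N n)) *: x n) m) _.
have t_ge0 k : 0 <= kappa ^+ k.+1 * absF (f k).
  by rewrite mulr_ge0 ?absF_ge0 ?exprn_ge0 ?(ltW kappa_gt0).
apply: le_trans _ (sumr_trunc_le m N t_ge0).
apply: ler_sum => k _; rewrite /trunc; case: ifP => _; last first.
  by rewrite absF0 rmorph0 scale0r q0 mulr0.
rewrite qZ absF_emb ?absF_ge0 // ler_wpM2l ?exprn_ge0 ?(ltW kappa_gt0) //.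
exact: ler_piMr (absF_ge0 _) (x_le1 k).
Qed.

Lemma cauchy_lambdaX_tail (f : nat -> F) :
  (forall x, qbounded q x -> qcauchy q (fun N => \sum_(n < N) f n *: x n)) ->
  forall e, 0 < e ->
    exists N, (lambdaX emb q (fun n => absF (f n - trunc f N n)) < e%:E)%E.
Proof.
move=> cauchy e e_gt0; apply: contrapT => /forallNP tail_ge.
pose tail N n := absF (f n - trunc f N n).
have /choice[W W_large] : forall N, exists W : nat * (nat -> X),
    (forall n, q (W.2 n) <= 1) /\
    e / 2 < q (\sum_(n < W.1) emb (tail N n) *: W.2 n).
  move=> N.
  have /lambdaX_gt[m [y [y_le1 large]]] :
      ((e / 2)%:E < lambdaX emb q (tail N))%E.
    apply: (@lt_le_trans _ _ e%:E); first by rewrite lte_fin; lra.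
    by rewrite leNgt; apply/negP; exact: tail_ge.
  by exists (m, y).
pose M N := (W N).1; pose y N := (W N).2.
have ltn_M N : (N < M N)%N.
  rewrite ltnNge; apply/negP => le_MN; have [_] := W_large N.
  rewrite big1 ?q0 => [|n _]; first by lra.
  rewrite /tail /trunc (leq_trans (ltn_ord n) le_MN).
  by rewrite subrr absF0 rmorph0 scale0r.
pose x k := (phase (f k))^-1 *: y (block_start M k) k.
have x_bounded : qbounded q x.
  by exists 1 => k; rewrite qZ absF_phaseV mul1r; exact: (W_large _).1.
have [N0 N0_cauchy] := cauchy x x_bounded _ (divr_gt0 e_gt0 (ltr0Sn _ 1)).
have [s le_N0s start_s] := block_start_unbounded ltn_M N0.
have := N0_cauchy (M s) s (leq_trans le_N0s (ltnW (ltn_M s))) le_N0s.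
rewrite (sumr_partialB (fun k => f k *: x k)); last exact: ltnW (ltn_M s).
have -> : \sum_(k < M s) (if (s <= k)%N then f k *: x k else 0) =
    \sum_(n < M s) emb (tail s n) *: y s n.
  apply: eq_bigr => k _; rewrite /tail /trunc; case: leqP => [le_sk|_].
    rewrite subr0 emb_absF /x (block_startE start_s); last by rewrite le_sk /=.
    by rewrite scalerA mul_phaseV.
  by rewrite subrr absF0 rmorph0 scale0r.
by move/(lt_trans (W_large s).2); rewrite ltxx.
Qed.

Lemma galb_b_of_lambdaX_tail (f : nat -> F) :
  (forall e, 0 < e ->
    exists N, (lambdaX emb q (fun n => absF (f n - trunc f N n)) < e%:E)%E) ->
  in_galb_b emb absF q f.
Proof.
move=> tail_small; pose C N := \sum_(k < N) kappa ^+ k.+1 * absF (f k).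
have in_galb_trunc N : in_galb emb absF q (trunc f N).
  apply: le_lt_trans (ltry (C N)); apply: lambdaX_le => m x.
  exact: q_sum_trunc_le.
split; last first.
  move=> e /tail_small[N tail_lt]; exists (trunc f N).
  by split; [exact: fin_supp_trunc | split].
have [N tail_lt1] := tail_small 1 ltr01.
apply: le_lt_trans (ltry (kappa * (C N + 1))); apply: lambdaX_le => m x x_le1.
have -> : \sum_(n < m) emb (absF (f n)) *: x n =
    \sum_(n < m) emb (absF (trunc f N n)) *: x n +
    \sum_(n < m) emb (absF (f n - trunc f N n)) *: x n.
  rewrite -big_split; apply: eq_bigr => n _ /=; rewrite !emb_absF /trunc.
  by case: ifP => _; rewrite ?subrr ?subr0 normr0 scale0r ?addr0 ?add0r.
apply: le_trans (qD _ _) _; rewrite ler_wpM2l ?(ltW kappa_gt0) // lerD //.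
  exact: q_sum_trunc_le.
exact: ltW (lambdaX_lt tail_lt1 m x_le1).
Qed.

Lemma galb_b_iff_cauchy (f : nat -> F) : in_galb_b emb absF q f <->
  forall x, qbounded q x -> qcauchy q (fun N => \sum_(n < N) f n *: x n).
Proof.
split; first exact: galb_b_cauchy.
by move=> cauchy; apply: galb_b_of_lambdaX_tail; apply: cauchy_lambdaX_tail.
Qed.

End QuasiNormed.

Theorem galb_b_iff_series_converge (X : lmodType F) (q : X -> R) :
  lemma4p9_prop emb absF q.
Proof.
move=> [[_ _ qZ [kappa [kappa_ge1 qD]]] complete] f.
apply: iff_trans (galb_b_iff_cauchy qZ kappa_ge1 qD f) _.
split=> H x /H; first exact: complete.
by move=> [l]; apply: (qconverges_cauchy qZ kappa_ge1 qD).
Qed.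

End RealScalars.

Theorem lemma4p9 (R : realType) :
  (forall (X : lmodType R) (q : X -> R),
     lemma4p9_prop (fun r : R => r) (fun a : R => `|a|) q) /\
  (forall (X : lmodType R[i]) (q : X -> R),
     lemma4p9_prop (@realC R) (@modC R) q).
Proof.
split=> X q.
  exact: (@galb_b_iff_series_converge _ _ idfun).
apply: (@galb_b_iff_series_converge _ _ (real_complex R)) => //.
exact: lecR.
Qed.
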